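(* Let $G$ be a fully supported graph, and let $\mathcal{H}$ be the family of graphs $H=(\{v_1,v_2\},\beta)$ with $\beta(v_1,v_2)=\beta(v_2,v_1)=0$ and $\beta(v_1,v_1)>0$, $\beta(v_2,v_2)>0$ (two isolated vertices each with a self-loop of positive weight). The following are equivalent: (1) $G$ is connected; (2) $G$ is strongly disjoint from some $H\in\mathcal{H}$; (3) $G$ is strongly disjoint from every $H\in\mathcal{H}$.
   Context: A weight function on finite $U$ is $\alpha:U\times U\to\mathbb{R}$, $\alpha\ge0$, symmetric, summing to $1$; degree $p(u)=\sum_{u'}\alpha(u,u')$; a graph is $(U,\alpha)$ with edges $(u,u')$ where $\alpha(u,u')>0$; fully supported means $p(u)>0$ for all $u$; connected means any two distinct vertices are joined by a path of edges. For graphs $(U,\alpha)$, $(V,\beta)$ with degrees $p,q$, a weight joining is a weight function $\gamma$ on $U\times V$ with degree $r(u,v)=\sum_{(u',v')}\gamma((u,v),(u',v'))$ such that $\sum_v r(u,v)=p(u)$, $\sum_u r(u,v)=q(v)$, $p(u)\sum_{\tilde v}\gamma((u,v),(u',\tilde v))=\alpha(u,u')r(u,v)$ and $q(v)\sum_{\tilde u}\gamma((u,v),(\tilde u,v'))=\beta(v,v')r(u,v)$ for all $u,u',v,v'$. The graphs are strongly disjoint if the only weight joining is $\alpha\otimes\beta$, $(\alpha\otimes\beta)((u,v),(u',v'))=\alpha(u,u')\beta(v,v')$. *)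

(* Weights take values in an arbitrary real field R
   (the paper uses the reals; realType instances included). *)
From mathcomp Require Import all_boot all_order all_algebra.
Set Implicit Arguments. Unset Strict Implicit. Unset Printing Implicit Defensive.
Import Order.TTheory GRing.Theory Num.Theory.
Local Open Scope ring_scope.

Section Defs.
Variable R : realFieldType.

Definition weight_fun (U : finType) (a : U -> U -> R) : Prop :=
  (forall u u', 0 <= a u u') /\ (forall u u', a u u' = a u' u) /\
  \sum_(u : U) \sum_(u' : U) a u u' = 1.

Definition deg (U : finType) (a : U -> U -> R) (u : U) : R :=
  \sum_(u' : U) a u u'.

Definition fully_supported (U : finType) (a : U -> U -> R) : Prop :=
  forall u, 0 < deg a u.

Definition edge (U : finType) (a : U -> U -> R) : rel U :=
  fun u u' => 0 < a u u'.

Definition connected (U : finType) (a : U -> U -> R) : Prop :=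
  forall u u' : U, u != u' -> connect (edge a) u u'.

Definition tensor (U V : finType) (a : U -> U -> R) (b : V -> V -> R)
  : (U * V)%type -> (U * V)%type -> R :=
  fun x y => a x.1 y.1 * b x.2 y.2.

Definition weight_joining (U V : finType) (a : U -> U -> R) (b : V -> V -> R)
  (g : (U * V)%type -> (U * V)%type -> R) : Prop :=
  weight_fun g /\
  (forall u, \sum_(v : V) deg g (u, v) = deg a u) /\
  (forall v, \sum_(u : U) deg g (u, v) = deg b v) /\
  (forall u u' v, deg a u * (\sum_(v' : V) g (u, v) (u', v'))
                  = a u u' * deg g (u, v)) /\
  (forall u v v', deg b v * (\sum_(u' : U) g (u, v) (u', v'))
                  = b v v' * deg g (u, v)).

Definition strongly_disjoint (U V : finType) (a : U -> U -> R) (b : V -> V -> R)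
  : Prop :=
  forall g, weight_joining a b g -> g = tensor a b.

Definition in_family_H (b : bool -> bool -> R) : Prop :=
  weight_fun b /\ b true false = 0 /\ b false true = 0 /\
  0 < b true true /\ 0 < b false false.

End Defs.

From mathcomp Require Import all_boot all_order all_algebra.
From mathcomp Require Import ring lra.
From Stdlib Require Import FunctionalExtensionality.
Set Implicit Arguments. Unset Strict Implicit. Unset Printing Implicit Defensive.
Import Order.TTheory GRing.Theory Num.Theory.
Local Open Scope ring_scope.

(* A weight joining g of G with H = ({v1, v2}, b) cannot move mass between the
   two loops of H, so it is determined by the share h(u) = r(u, v1) / p(u) in
   [0, 1]; the joining conditions say exactly that h is constant along the edges
   of G and has p-mean b(v1, v1), and the product joining is h = b(v1, v1).
   On a connected G such an h is constant, so g is the product. Otherwise, if c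
   is the indicator of a component of p-mass s < 1, then
   h = b(v1, v1) + b(v1, v1) b(v2, v2) (c - s) gives a second joining. *)

Lemma sumr_pair_bool (V : nmodType) (U : finType) (F : U * bool -> V) :
  \sum_x F x = \sum_u (F (u, true) + F (u, false)).
Proof.
rewrite (eq_bigr (fun x => F (x.1, x.2))); last by case.
rewrite -(pair_big xpredT xpredT (fun u v => F (u, v))).
by apply: eq_bigr => u _; rewrite big_bool.
Qed.

Section FamilyH.
Variables (R : realFieldType) (b : bool -> bool -> R).
Hypothesis Hb : in_family_H b.

Lemma family_H_offdiag v v' : v != v' -> b v v' = 0.
Proof. by case: Hb => _ [? [? _]]; case: v; case: v'. Qed.

Lemma family_H_loop_gt0 v : 0 < b v v.
Proof. by case: Hb => _ [_ [_ [? ?]]]; case: v. Qed.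

Lemma family_H_deg v : deg b v = b v v.
Proof.
rewrite /deg big_bool /=.
by case: v; rewrite ?[b true false]family_H_offdiag ?[b false true]family_H_offdiag
  ?addr0 ?add0r.
Qed.

Lemma family_H_loops_sum : b true true + b false false = 1.
Proof.
case: Hb => [[_ [_ sum1]] _]; move: sum1.
by rewrite !big_bool /= [b true false]family_H_offdiag // [b false true]family_H_offdiag
  // addr0 add0r.
Qed.

End FamilyH.

Lemma family_H_uniform (R : realFieldType) :
  in_family_H (fun v v' : bool => if v == v' then 2^-1 else 0 : R).
Proof.
split; last by rewrite /=; split; [|split; [|split]]; lra.
split; [|split].
- by move=> v v'; case: (v == v'); rewrite ?invr_ge0 ?ler0n.
- by move=> v v'; rewrite eq_sym.
- by rewrite !big_bool /=; lra.
Qed.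

Lemma connect_invariant (T : finType) (e : rel T) (S : eqType) (f : T -> S) x y :
  (forall x' y', e x' y' -> f x' = f y') -> connect e x y -> f x = f y.
Proof.
move=> inv_f xy; apply/esym/eqP.
have cl : closed e [pred z | f z == f x].
  by move=> x' y' /inv_f fxy; rewrite !inE fxy.
by rewrite -[_ == _]/(y \in [pred z | f z == f x]) -(closed_connect cl xy) inE.
Qed.

Lemma edge_sym (R : realFieldType) (U : finType) (a : U -> U -> R) :
  weight_fun a -> symmetric (edge a).
Proof. by case=> _ [asym _] u u'; rewrite /edge asym. Qed.

Section Joinings.
Variables (R : realFieldType) (U : finType) (a : U -> U -> R) (b : bool -> bool -> R).
Hypotheses (Ha : weight_fun a) (Hfs : fully_supported a) (Hb : in_family_H b).

Let a_ge0 u u' : 0 <= a u u'. Proof. by case: Ha. Qed.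
Let a_sym u u' : a u u' = a u' u. Proof. by case: Ha => _ []. Qed.
Let deg_sum1 : \sum_u deg a u = 1. Proof. by case: Ha => _ []. Qed.
Let deg_neq0 u : deg a u != 0. Proof. exact/lt0r_neq0/Hfs. Qed.

Lemma weight_joining_offdiag g u u' v v' :
  weight_joining a b g -> v != v' -> g (u, v) (u', v') = 0.
Proof.
move=> [[g_ge0 _] [_ [_ [_ Jb]]]] vv'.
have := Jb u v v'; rewrite family_H_offdiag // mul0r family_H_deg // => /eqP.
rewrite mulf_eq0 (negbTE (lt0r_neq0 (family_H_loop_gt0 Hb v))) => /eqP/psumr_eq0P.
by apply => // u'' _; apply: g_ge0.
Qed.

Lemma weight_joining_diag g u u' v : weight_joining a b g ->
  g (u, v) (u', v) = a u u' * (deg g (u, v) / deg a u).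
Proof.
move=> J; case: (J) => _ [_ [_ [Ja _]]].
apply: (mulfI (deg_neq0 u)).
rewrite [RHS]mulrCA [in RHS](mulrC (deg a u)) divfK // -Ja big_bool /=.
by case: v; [rewrite [g _ (_, false)](weight_joining_offdiag _ _ J) // addr0
            | rewrite [g _ (_, true)](weight_joining_offdiag _ _ J) // add0r].
Qed.

Lemma connected_strongly_disjoint : connected a -> strongly_disjoint a b.
Proof.
move=> Hc g J; case: (J) => [[_ [g_sym _]] [_ [Jmarg _]]].
pose share v u := deg g (u, v) / deg a u.
have share_edge v u u' : edge a u u' -> share v u = share v u'.
  move=> uu'; apply: (mulfI (lt0r_neq0 uu')).
  by rewrite -weight_joining_diag // g_sym weight_joining_diag // a_sym.
have share_const v u u' : share v u = share v u'.
  have [-> // | uu'] := eqVneq u u'.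
  exact: (connect_invariant (share_edge v) (Hc _ _ uu')).
have share_deg v u : share v u = b v v.
  rewrite -family_H_deg // -Jmarg -[LHS]mulr1 -deg_sum1 mulr_sumr.
  by apply: eq_bigr => u' _; rewrite (share_const v u u') /share divfK.
apply: functional_extensionality => -[u v].
apply: functional_extensionality => -[u' v'].
rewrite /tensor /=; have [<- | vv'] := eqVneq v v'.
  by rewrite weight_joining_diag // -/(share v u) share_deg.
by rewrite weight_joining_offdiag // family_H_offdiag // mulr0.
Qed.

Definition split_share (h : U -> R) (v : bool) (u : U) : R :=
  if v then h u else 1 - h u.

Definition split_joining (h : U -> R) (x y : U * bool) : R :=
  if x.2 == y.2 then a x.1 y.1 * split_share h x.2 x.1 else 0.

Lemma deg_split_joining h u v :
  deg (split_joining h) (u, v) = deg a u * split_share h v u.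
Proof.
rewrite /deg sumr_pair_bool mulr_suml; apply: eq_bigr => u' _.
by rewrite /split_joining; case: v => /=; rewrite ?addr0 ?add0r.
Qed.

Lemma split_joining_weight_joining h :
  (forall u, 0 <= h u <= 1) -> (forall u u', edge a u u' -> h u = h u') ->
  \sum_u deg a u * h u = b true true -> weight_joining a b (split_joining h).
Proof.
move=> h01 h_edge h_mean.
have share_ge0 v u : 0 <= split_share h v u.
  by have /andP[? ?] := h01 u; case: v => /=; lra.
have deg_share u : split_share h true u + split_share h false u = 1.
  by rewrite /=; ring.
split; [split; [|split] | split; [|split; [|split]]].
- move=> [u v] [u' v']; rewrite /split_joining /=.
  by case: eqP => _ //; apply: mulr_ge0.
- move=> [u v] [u' v']; rewrite /split_joining /= eq_sym.
  have [<- | //] := eqVneq v v'; rewrite [a u' u]a_sym.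
  have [-> | uu'] := eqVneq (a u u') 0; first by rewrite !mul0r.
  by rewrite /split_share (h_edge u u') // /edge lt0r uu' a_ge0.
- rewrite -deg_sum1 -[LHS]/(\sum_x deg (split_joining h) x) sumr_pair_bool.
  by apply: eq_bigr => u _; rewrite !deg_split_joining -mulrDr deg_share mulr1.
- by move=> u; rewrite big_bool /= !deg_split_joining -mulrDr deg_share mulr1.
- move=> v; under eq_bigr do rewrite deg_split_joining.
  rewrite family_H_deg //; case: v; first by [].
  rewrite /= (eq_bigr (fun u => deg a u - deg a u * h u)); last by move=> u _; ring.
  by rewrite sumrB h_mean deg_sum1 -(family_H_loops_sum Hb) addrC addKr.
- move=> u u' v; rewrite big_bool deg_split_joining /split_joining /=.
  by case: v => /=; ring.
- move=> u v v'; rewrite deg_split_joining family_H_deg //.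
  have [<- | vv'] := eqVneq v v'.
    rewrite /deg mulr_suml; congr (_ * _); apply: eq_bigr => u' _.
    by rewrite /split_joining /= eqxx.
  rewrite [b v v']family_H_offdiag // mul0r big1 ?mulr0 // => u' _.
  by rewrite /split_joining /= (negbTE vv').
Qed.

Lemma split_joining_tensor h u :
  split_joining h = tensor a b -> h u = b true true.
Proof.
move=> gE; apply: (mulfI (deg_neq0 u)).
have := congr1 (fun g => deg g (u, true)) gE.
rewrite deg_split_joining /deg sumr_pair_bool -/(deg a u) => ->.
rewrite /tensor /deg /= mulr_suml; apply: eq_bigr => u' _.
by rewrite [b true false]family_H_offdiag // mulr0 addr0.
Qed.

Lemma not_connect_not_strongly_disjoint u0 u1 :
  ~~ connect (edge a) u0 u1 -> ~ strongly_disjoint a b.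
Proof.
move=> u0u1 Hsd.
pose c u : R := (connect (edge a) u0 u)%:R.
pose s := \sum_u deg a u * c u.
pose b1 := b true true; pose b2 := b false false; pose e := b1 * b2.
pose h u := b1 + e * (c u - s).
have c01 u : c u = 0 \/ c u = 1 by rewrite /c; case: (connect _ _ _); [right | left].
have s_ge0 : 0 <= s.
  by apply: sumr_ge0 => u _; rewrite mulr_ge0 ?ler0n // ltW.
have s_lt1 : s < 1.
  have c_u1 : c u1 = 0 by rewrite /c (negbTE u0u1).
  rewrite -deg_sum1 [X in _ < X](bigD1 u1) //= [s](bigD1 u1) //=.
  rewrite c_u1 mulr0 add0r ltr_pwDl //.
  apply: ler_sum => u _; case: (c01 u) => ->; rewrite ?mulr0 ?mulr1 //.
  exact/ltW.
have b1_gt0 : 0 < b1 := family_H_loop_gt0 Hb true.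
have b2_gt0 : 0 < b2 := family_H_loop_gt0 Hb false.
have b12 : b1 + b2 = 1 := family_H_loops_sum Hb.
have e_le : e <= b1 /\ e <= b2 by rewrite /e; split; nra.
have e_gt0 : 0 < e by apply: mulr_gt0.
have es : 0 <= e * s /\ e * s < e by split; nra.
have h01 u : 0 <= h u <= 1.
  by rewrite /h; case: (c01 u) => ->; apply/andP; split; lra.
have h_edge u u' : edge a u u' -> h u = h u'.
  move=> uu'; have cE : connect (edge a) u0 u = connect (edge a) u0 u'
    := connect_closed (sym_connect_sym (edge_sym Ha)) u0 uu'.
  by rewrite /h /c cE.
have h_mean : \sum_u deg a u * h u = b1.
  rewrite (eq_bigr (fun u => (b1 - e * s) * deg a u + e * (deg a u * c u))).
    by rewrite big_split /= -!mulr_sumr deg_sum1 -/s; ring.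
  by move=> u _; rewrite /h; ring.
have := split_joining_tensor u0 (Hsd _ (split_joining_weight_joining h01 h_edge h_mean)).
have c_u0 : c u0 = 1 by rewrite /c connect0.
rewrite /h c_u0 -/b1; nra.
Qed.

End Joinings.

Theorem proposition7p2 (R : realFieldType) (U : finType) (a : U -> U -> R)
  (Ha : weight_fun a) (Hfs : fully_supported a) :
  (connected a <-> exists b : bool -> bool -> R,
                     in_family_H b /\ strongly_disjoint a b) /\
  (connected a <-> forall b : bool -> bool -> R,
                     in_family_H b -> strongly_disjoint a b).
Proof.
have sd_connected b : in_family_H b -> strongly_disjoint a b -> connected a.
  move=> Hb Hsd u u' _; apply/negPn/negP => uu'.
  exact: (not_connect_not_strongly_disjoint Ha Hfs Hb uu' Hsd).
have Hb0 := family_H_uniform R.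
split; split.
- by move=> Hc; eexists; split; last exact: (connected_strongly_disjoint Ha Hfs Hb0).
- by case=> b [Hb]; apply: sd_connected.
- by move=> Hc b Hb; apply: (connected_strongly_disjoint Ha Hfs Hb).
- by move=> Hsd; apply: sd_connected Hb0 (Hsd _ Hb0).
Qed.
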